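(* For every $n\in\mathbb{N}$ there exists a constant $K_n$, depending only on $n$, with the following property. Let $K$ be a multicomplex and let $\Gamma$ be a group acting on $K$ by simplicial automorphisms such that every element of $\Gamma$ is simplicially homotopic to the identity of $K$. Let $c\in C_n(K)$ be a simplicial cycle and let $\mu$ be a probability measure on $\Gamma$ with finite support. Then there exists $b\in C_{n+1}(K)$ such that $(\mu*c)-c=\partial b$ and $\|b\|_1\leq K_n\|c\|_1$.
   Context: A multicomplex is a regular unordered $\Delta$-complex: a $\Delta$-complex in which each simplex has distinct vertices which are unordered, and the intersection of any two simplices is a subcomplex of each (distinct simplices may share the same vertex set). An algebraic $n$-simplex of $K$ is a pair $\sigma=(\Delta,(v_0,\dots,v_n))$ where $\Delta$ is a simplex of $K$ and $\{v_0,\dots,v_n\}$ equals the vertex set of $\Delta$ (repetitions allowed); its $i$-th face is $(\Delta',(v_0,\dots,\widehat{v_i},\dots,v_n))$, where $\Delta'=\Delta$ if the vertex set does not change and otherwise $\Delta'$ is the face of $\Delta$ spanned by the remaining vertices. $C_n(K)$ is the real vector space with basis the algebraic $n$-simplices, with boundary $\partial=\sum_i(-1)^i\partial^i$ and $\ell^1$-norm $\|\sum a_\sigma\sigma\|_1=\sum|a_\sigma|$. Simplicial automorphisms act on algebraic simplices, hence linearly on $C_n(K)$. For a finitely supported probability measure $\mu$ on $\Gamma$, the diffusion of $c\in C_n(K)$ is $\mu*c=\sum_{\gamma\in\Gamma}\mu(\gamma)\,(\gamma\cdot c)$. A simplicial map $f\colon K\to K$ is simplicially homotopic to the identity if there is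 a simplicial map $F\colon K\times[0,1]\to K$ (from the product multicomplex) with $F\circ i_0=f$ and $F\circ i_1=\mathrm{id}_K$, where $i_j\colon K\to K\times\{j\}$ are the inclusions. *)

From HB Require Import structures.
From mathcomp Require Import all_boot all_order all_algebra.
From mathcomp Require Import finmap.
From mathcomp Require Import freeg.
From mathcomp Require Import reals.
From Stdlib Require List.

Set Implicit Arguments.
Unset Strict Implicit.
Unset Printing Implicit Defensive.

Import Order.TTheory GRing.Theory Num.Theory.
Local Open Scope ring_scope.
Local Open Scope fset_scope.

(* Combinatorial data of a (regular, unordered) Delta-complex:         *)
(* a type of vertices, a type of simplices, the vertex set of each     *)
(* simplex, and the face of a simplex spanned by a set W of its        *)
(* vertices (the value of [face s W] is irrelevant unless W is a       *)
(* nonempty subset of [vset s]).                                        *)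
Record mcdata := MCData {
  mc_V : choiceType;
  mc_S : choiceType;
  vset : mc_S -> {fset mc_V};
  face : mc_S -> {fset mc_V} -> mc_S
}.

(* Gluing is along faces, matching vertices (unordered vertices), so the
   intersection of two simplices is the union of their common faces, which
   is a subcomplex of each. *)
Definition is_multicomplex (K : mcdata) : Prop :=
  (forall s : mc_S K, vset s != fset0) /\
  (forall (s : mc_S K) W, W `<=` vset s -> W != fset0 -> vset (face s W) = W) /\
  (forall s : mc_S K, face s (vset s) = s) /\
  (forall (s : mc_S K) W W', W' `<=` W -> W `<=` vset s -> W' != fset0 ->
      face (face s W) W' = face s W') /\
  (forall (v : mc_V K), exists s, vset s = [fset v]) /\
  (forall s t (v : mc_V K), vset s = [fset v] -> vset t = [fset v] -> s = t).

Definition is_smap (K L : mcdata) (fv : mc_V K -> mc_V L)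
    (fs : mc_S K -> mc_S L) : Prop :=
  (forall s, vset (fs s) = [fset fv x | x in vset s]) /\
  (forall s W, W `<=` vset s -> W != fset0 ->
     fs (face s W) = face (fs s) [fset fv x | x in W]).

Definition is_sautom (K : mcdata) (fv : mc_V K -> mc_V K)
    (fs : mc_S K -> mc_S K) : Prop :=
  is_smap fv fs /\
  exists (gv : mc_V K -> mc_V K) (gs : mc_S K -> mc_S K),
    [/\ is_smap gv gs, cancel fv gv, cancel gv fv, cancel fs gs & cancel gs fs].

Definition is_saction (K : mcdata) (G : groupType)
    (av : G -> mc_V K -> mc_V K) (as_ : G -> mc_S K -> mc_S K) : Prop :=
  [/\ (forall g, is_sautom (av g) (as_ g)),
      av 1%g =1 id, as_ 1%g =1 id,
      (forall g h, av (g * h)%g =1 av g \o av h) &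
      (forall g h, as_ (g * h)%g =1 as_ g \o as_ h)].

(* The product multicomplex K x [0,1].  [0,1] is the standard 1-simplex
   with vertices 0 (= false) and 1 (= true).  A simplex of the product
   K x L is a triple (sigma, tau, S) with S a set of vertices of
   V(sigma) x V(tau) projecting onto V(sigma) and V(tau) and forming a
   chain for the product order of some total orders on V(sigma), V(tau).
   For L = [0,1], writing S = A x {0} u B x {1}, this means exactly
   A u B = V(sigma) and #|A n B| <= 1 (tau is determined by which of A, B
   are nonempty). *)
Section Prism.
Variable K : mcdata.

Definition prism_ok (x : mc_S K * {fset mc_V K} * {fset mc_V K}) : bool :=
  (x.1.2 `|` x.2 == vset x.1.1) && (#|` x.1.2 `&` x.2| <= 1)%N.

Definition prism_simp : choiceType :=
  [the choiceType of {x : mc_S K * {fset mc_V K} * {fset mc_V K} | prism_ok x}].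

Definition prism_vset (x : prism_simp) : {fset (mc_V K * bool)} :=
  [fset (v, false) | v in (val x).1.2] `|` [fset (v, true) | v in (val x).2].

Definition prism_face (x : prism_simp) (W : {fset (mc_V K * bool)}) :
    prism_simp :=
  let A := [fset p.1 | p in W & ~~ p.2] in
  let B := [fset p.1 | p in W & p.2] in
  insubd x (face (val x).1.1 (A `|` B), A, B).

Definition prism : mcdata :=
  @MCData [the choiceType of (mc_V K * bool)%type] prism_simp
          prism_vset prism_face.

Lemma prism_ok0 (s : mc_S K) : prism_ok (s, vset s, fset0).
Proof. by rewrite /prism_ok /= fsetU0 fsetI0 cardfs0 eqxx. Qed.

Lemma prism_ok1 (s : mc_S K) : prism_ok (s, fset0, vset s).
Proof. by rewrite /prism_ok /= fset0U fset0I cardfs0 eqxx. Qed.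

Definition incl_v (j : bool) (v : mc_V K) : mc_V prism := (v, j).
Definition incl_s (j : bool) (s : mc_S K) : mc_S prism :=
  if j then exist _ (s, fset0, vset s) (prism_ok1 s)
  else exist _ (s, vset s, fset0) (prism_ok0 s).

End Prism.

Definition simp_homotopic_to_id (K : mcdata) (fv : mc_V K -> mc_V K)
    (fs : mc_S K -> mc_S K) : Prop :=
  exists (Fv : mc_V (prism K) -> mc_V K) (Fs : mc_S (prism K) -> mc_S K),
    [/\ is_smap Fv Fs,
        Fv \o incl_v false =1 fv, Fs \o incl_s false =1 fs,
        Fv \o incl_v true =1 id & Fs \o incl_s true =1 id].

(* A chain is a finite formal R-linear combination of pairs
   (Delta, (v_0,...,v_k)); C_n(K) consists of the chains supported on
   algebraic n-simplices, i.e. pairs with k = n and {v_0..v_n} = V(Delta). *)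
Section Chains.
Variables (K : mcdata) (R : realType).

Definition asimp : choiceType :=
  [the choiceType of (mc_S K * seq (mc_V K))%type].

Definition is_asimp (n : nat) (sg : asimp) : bool :=
  (size sg.2 == n.+1) && ([fset x | x in sg.2] == vset sg.1).

Definition chain := {freeg asimp / R}.

Definition is_chain (n : nat) (c : chain) : bool := all (is_asimp n) (dom c).

Definition gen (sg : asimp) : chain := Freeg [:: (1, sg)].

Definition aface (i : nat) (sg : asimp) : asimp :=
  let vs := take i sg.2 ++ drop i.+1 sg.2 in
  let W := [fset x | x in vs] in
  (if W == vset sg.1 then sg.1 else face sg.1 W, vs).

Definition bd_simp (sg : asimp) : chain :=
  if (size sg.2 <= 1)%N then 0
  else \sum_(i < size sg.2) (-1) ^+ i *: gen (aface i sg).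

Definition bd (c : chain) : chain := fglift bd_simp c.

Definition l1norm (c : chain) : R := \sum_(k <- dom c) `|coeff k c|.

Definition chain_map (fv : mc_V K -> mc_V K) (fs : mc_S K -> mc_S K)
    (c : chain) : chain :=
  fglift (fun sg : asimp => gen (fs sg.1, map fv sg.2)) c.

Definition fin_prob (G : Type) (mu : G -> R) (s : seq G) : Prop :=
  [/\ List.NoDup s, (forall g, ~ List.In g s -> mu g = 0), (forall g, 0 <= mu g)
    & \sum_(g <- s) mu g = 1].

Definition diffusion (G : Type) (av : G -> mc_V K -> mc_V K)
    (as_ : G -> mc_S K -> mc_S K) (mu : G -> R) (s : seq G) (c : chain) :
    chain :=
  \sum_(g <- s) mu g *: chain_map (av g) (as_ g) c.

End Chains.

(* Fix a cycle c and rank all the vertices occurring in c.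
   Over each simplex of c, the prism is cut into a staircase of (n+1)-simplices:
   stage j sends the vertices of rank < j through g and the others through the
   identity, and consecutive stages differ in the vertex of rank j only.  The
   standard prism operator, pushed forward by F along this staircase, gives a
   chain homotopy H with dH + Hd = id - g on the simplices of c.  Only the n+1
   steps at the ranks of the vertices of a simplex contribute, each with at most
   2(n+1) simplices, so ||H c|| <= 2(n+1)^2 ||c|| whatever the number of ranks.
   Since dc = 0, g c - c = d(-H c), and averaging these fillings over mu gives
   the filling of mu * c - c. *)

From HB Require Import structures.
From mathcomp Require Import all_boot all_order all_algebra.
From mathcomp Require Import finmap freeg reals.
From mathcomp Require Import zify.

Set Implicit Arguments.
Unset Strict Implicit.
Unset Printing Implicit Defensive.
Import Order.TTheory GRing.Theory Num.Theory.
Local Open Scope ring_scope.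

Section PrismSums.
Variables (T : Type) (M : zmodType).
Implicit Types (io : seq T -> M) (u v w x : seq T).

(* [face_sum io x] is sum_i (-1)^i io (x without x_i) and [prism_sum io u v]
   is sum_i (-1)^i io (u_0 .. u_i v_i .. v_n): the simplicial boundary and the
   standard prism operator, written for an arbitrary "generator" [io]. *)
Fixpoint face_sum io x : M :=
  if x is a :: x' then io x' - face_sum (fun y => io (a :: y)) x' else 0.

Fixpoint prism_sum io u v : M :=
  match u, v with
  | a :: u', b :: v' => io [:: a, b & v'] - prism_sum (fun y => io (a :: y)) u' v'
  | _, _ => 0
  end.

Lemma face_sum_ind (P : M -> Prop) (X : pred T) io x :
  P 0 -> (forall m m', P m -> P m' -> P (m - m')) -> all X x ->
  (forall y, (size y).+1 = size x -> all X y -> P (io y)) -> P (face_sum io x).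
Proof.
move=> P0 PB; elim: x io => [|a x IH] io //= /andP[Xa Xx] Pio.
apply: PB; first exact: Pio.
by apply: IH => // y Sy Xy; apply: Pio; rewrite /= ?Sy ?Xa.
Qed.

Lemma prism_sum_ind (P : M -> Prop) (X : pred T) io u v :
  P 0 -> (forall m m', P m -> P m' -> P (m - m')) ->
  size u = size v -> all X u -> all X v ->
  (forall y, size y = (size u).+1 -> all X y -> P (io y)) -> P (prism_sum io u v).
Proof.
move=> P0 PB; elim: u v io => [|a u IH] [|b v] io //= [Suv] /andP[Xa Xu].
move=> /andP[Xb Xv] Pio; apply: PB; first by apply: Pio; rewrite /= ?Suv ?Xa ?Xb.
by apply: IH => // y Sy Xy; apply: Pio; rewrite /= ?Sy ?Xa.
Qed.

Lemma face_sumB io io' x :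
  face_sum (fun y => io y - io' y) x = face_sum io x - face_sum io' x.
Proof.
elim: x io io' => [|a x IH] io io' /=; first by rewrite subr0.
by rewrite (IH (fun y => io (a :: y))) !opprD !opprK addrACA.
Qed.

Lemma prism_sumB io io' u v :
  prism_sum (fun y => io y - io' y) u v = prism_sum io u v - prism_sum io' u v.
Proof.
elim: u v io io' => [|a u IH] [|b v] io io' /=; rewrite ?subr0 //.
by rewrite (IH v (fun y => io (a :: y))) !opprD !opprK addrACA.
Qed.

Lemma face_sum_map (f : T -> T) io x :
  face_sum (fun y => io (map f y)) x = face_sum io (map f x).
Proof. by elim: x io => [|a x IH] io //=; rewrite (IH (fun y => io (f a :: y))). Qed.

Lemma face_sum_eq_in (X : pred T) io io' x : all X x ->
  (forall y, (size y).+1 = size x -> all X y -> io y = io' y) ->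
  face_sum io x = face_sum io' x.
Proof.
move=> Xx E; apply/eqP; rewrite -subr_eq0 -face_sumB; apply/eqP.
apply: (face_sum_ind (P := eq^~ 0) (X := X)) => // [? ? -> ->|y Sy Xy].
  by rewrite subr0.
by rewrite E // subrr.
Qed.

Lemma prism_sum_eq_in (X : pred T) io io' u v :
  size u = size v -> all X u -> all X v ->
  (forall y, size y = (size u).+1 -> all X y -> io y = io' y) ->
  prism_sum io u v = prism_sum io' u v.
Proof.
move=> Suv Xu Xv E; apply/eqP; rewrite -subr_eq0 -prism_sumB; apply/eqP.
apply: (prism_sum_ind (P := eq^~ 0) (X := X)) => // [? ? -> ->|y Sy Xy].
  by rewrite subr0.
by rewrite E // subrr.
Qed.

Lemma prism_sum_homotopy (f' f : T -> T) io w :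
  prism_sum (face_sum io) (map f' w) (map f w)
  + face_sum (fun y => prism_sum io (map f' y) (map f y)) w
  = io (map f w) - io (map f' w).
Proof.
elim: w io => [|x w IH] io /=; first by rewrite subrr addr0.
set a := f' x; set b := f x.
rewrite prism_sumB face_sumB (face_sum_map f (fun y => io [:: a, b & y])).
move: (IH (fun y => io (a :: y))); set X := prism_sum _ _ _; set Y := face_sum _ w.
move=> XY; rewrite -[X](addrK Y) XY.
by rewrite !opprB !addrA !subrK addrAC addrK.
Qed.

End PrismSums.

Section PrismSumsMorphism.
Variables (T : Type) (M M' : zmodType) (L : M -> M').
Hypothesis LB : {morph L : m m' / m - m'}.

Let L0 : L 0 = 0.
Proof. by rewrite -(subrr 0) LB subrr. Qed.

Lemma face_sum_morph (io : seq T -> M) x :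
  L (face_sum io x) = face_sum (fun y => L (io y)) x.
Proof.
elim: x io => [|a x IH] io /=; first exact: L0.
by rewrite LB (IH (fun y => io (a :: y))).
Qed.

Lemma prism_sum_morph (io : seq T -> M) u v :
  L (prism_sum io u v) = prism_sum (fun y => L (io y)) u v.
Proof.
elim: u v io => [|a u IH] [|b v] io /=; rewrite ?L0 //.
by rewrite LB (IH v (fun y => io (a :: y))).
Qed.

End PrismSumsMorphism.

Lemma prism_sum_norm (T : Type) (M : zmodType) (R : numDomainType) (N : M -> R)
    (X : pred T) (io : seq T -> M) u v :
  N 0 = 0 -> (forall m m', N (m - m') <= N m + N m') ->
  size u = size v -> all X u -> all X v ->
  (forall y, size y = (size u).+1 -> all X y -> N (io y) <= 1) ->
  N (prism_sum io u v) <= (size u)%:R.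
Proof.
move=> N0 NB; elim: u v io => [|a u IH] [|b v] io //=; rewrite ?N0 //.
move=> [Suv] /andP[Xa Xu] /andP[Xb Xv] Nio.
rewrite -add1n natrD; apply: le_trans (NB _ _) (lerD _ _).
  by apply: Nio; rewrite /= ?Suv ?Xa ?Xb.
by apply: IH => // y Sy Xy; apply: Nio; rewrite /= ?Sy ?Xa.
Qed.

Lemma face_sumE (T : Type) (R : pzRingType) (M : lmodType R) (io : seq T -> M) x :
  face_sum io x = \sum_(i < size x) (-1) ^+ i *: io (take i x ++ drop i.+1 x).
Proof.
elim: x io => [|a x IH] io /=; first by rewrite big_ord0.
rewrite big_ord_recl /= expr0 scale1r drop0 IH -sumrN.
by congr (_ + _); apply: eq_bigr => i _; rewrite exprS mulN1r scaleNr.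
Qed.

HB.instance Definition _ (R : nzRingType) (K : choiceType) (M : lmodType R)
    (f : K -> M) :=
  GRing.isZmodMorphism.Build {freeg K / R} M (fglift f) (lift_is_additive f).

Section FreegLift.
Variables (R : nzRingType) (K : choiceType).
Implicit Types (D : {freeg K / R}) (z : K).

Lemma big_dom_supset (M : zmodType) D (F : K -> M) (s : seq K) :
  uniq s -> {subset dom D <= s} -> (forall z, coeff z D = 0 -> F z = 0) ->
  \sum_(z <- dom D) F z = \sum_(z <- s) F z.
Proof.
move=> us sub F0; rewrite [RHS](bigID (mem (dom D))) /=.
rewrite [X in _ = _ + X]big1_seq ?addr0 => [|z /andP[zD _]]; last first.
  by apply: F0; apply: coeff_outdom.
rewrite -[RHS]big_filter; apply/perm_big/uniq_perm; rewrite ?filter_uniq //.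
  exact: uniq_dom.
by move=> z; rewrite mem_filter; case: (boolP (z \in dom D)) => // /sub ->.
Qed.

Lemma fgliftE (M : lmodType R) (f : K -> M) D :
  fglift f D = \sum_(z <- dom D) coeff z D *: f z.
Proof.
by rewrite -{1}[D]freeg_sumE raddf_sum; apply: eq_bigr => z _; apply: liftU.
Qed.

(* [raddfB] states this for the additive-morphism view of [fglift f], whose
   coercion then gets in the way of rewriting with the other lemmas. *)
Lemma fgliftB (M : lmodType R) (f : K -> M) : {morph fglift f : D D' / D - D'}.
Proof. exact: raddfB. Qed.

Lemma eq_in_fglift (M : lmodType R) (f g : K -> M) D :
  {in dom D, f =1 g} -> fglift f D = fglift g D.
Proof. by move=> fg; rewrite !fgliftE; apply: eq_big_seq => z /fg ->. Qed.

Lemma fgliftZ (M : lmodType R) (f : K -> M) k D :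
  fglift f (k *: D) = k *: fglift f D.
Proof.
rewrite fgliftE (big_dom_supset (uniq_dom D) (@domZ_subset _ _ k D)).
  rewrite fgliftE scaler_sumr; apply: eq_bigr => z _; by rewrite coeffZ scalerA.
by move=> z ->; rewrite scale0r.
Qed.

Lemma fglift_id D : fglift (fun z => << z >>) D = D.
Proof.
rewrite fgliftE -[RHS]freeg_sumE; apply: eq_bigr => z _.
by apply/eqP/freeg_eqP => x; rewrite coeffZ !coeffU mul1r.
Qed.

Lemma fglift_comp (f g : K -> {freeg K / R}) D :
  fglift g (fglift f D) = fglift (fun z => fglift g (f z)) D.
Proof.
rewrite [fglift f D]fgliftE raddf_sum fgliftE.
by apply: eq_bigr => z _; apply: fgliftZ.
Qed.

Lemma fglift_funB (M : lmodType R) (f g : K -> M) D :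
  fglift (fun z => f z - g z) D = fglift f D - fglift g D.
Proof. by rewrite !fgliftE -sumrB; apply: eq_bigr => z _; rewrite scalerBr. Qed.

Lemma fglift_funsum (M : lmodType R) (m : nat) (F : 'I_m -> K -> M) D :
  fglift (fun z => \sum_(j < m) F j z) D = \sum_(j < m) fglift (F j) D.
Proof.
rewrite fgliftE; under eq_bigr do rewrite scaler_sumr.
by rewrite exchange_big; apply: eq_bigr => j _; rewrite fgliftE.
Qed.

End FreegLift.

Section L1Norm.
Variables (K : mcdata) (R : realType).
Implicit Types (c d : chain K R).

Lemma l1norm_supset c (s : seq (asimp K)) : uniq s -> {subset dom c <= s} ->
  l1norm c = \sum_(z <- s) `|coeff z c|.
Proof. by move=> us sub; apply: big_dom_supset => // z ->; rewrite normr0. Qed.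

Lemma l1norm0 : l1norm (0 : chain K R) = 0.
Proof. by rewrite /l1norm dom0 big_nil. Qed.

Lemma l1normD c d : l1norm (c + d) <= l1norm c + l1norm d.
Proof.
have us := undup_uniq (dom c ++ dom d).
rewrite (l1norm_supset us) => [|z /domD_subset]; last by rewrite mem_undup.
rewrite (l1norm_supset (c := c) us) => [|z zc]; last by rewrite mem_undup mem_cat zc.
rewrite (l1norm_supset (c := d) us) => [|z zd]; last first.
  by rewrite mem_undup mem_cat zd orbT.
by rewrite -big_split /=; apply: ler_sum => z _; rewrite coeffD ler_normD.
Qed.

Lemma l1normN c : l1norm (- c) = l1norm c.
Proof.
rewrite (l1norm_supset (uniq_dom c)) => [|z]; last by rewrite domN.
by apply: eq_bigr => z _; rewrite coeffN normrN.
Qed.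

Lemma l1normB c d : l1norm (c - d) <= l1norm c + l1norm d.
Proof. by rewrite -(l1normN d) l1normD. Qed.

Lemma l1normZ k c : l1norm (k *: c) = `|k| * l1norm c.
Proof.
rewrite (l1norm_supset (uniq_dom c)); last exact: domZ_subset.
by rewrite /l1norm mulr_sumr; apply: eq_bigr => z _; rewrite coeffZ normrM.
Qed.

Lemma l1norm_gen (sg : asimp K) : l1norm (gen R sg) = 1.
Proof. by rewrite /l1norm domU1 big_seq1 coeffU eqxx mulr1 normr1. Qed.

Lemma l1norm_sum I (r : seq I) (P : pred I) (F : I -> chain K R) :
  l1norm (\sum_(i <- r | P i) F i) <= \sum_(i <- r | P i) l1norm (F i).
Proof.
elim/big_rec2: _ => [|i y c _ yc]; first by rewrite l1norm0.
by apply: le_trans (l1normD _ _) _; rewrite lerD2l.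
Qed.

Lemma l1norm_fglift (f : asimp K -> chain K R) c :
  l1norm (fglift f c) <= \sum_(z <- dom c) `|coeff z c| * l1norm (f z).
Proof.
rewrite fgliftE; apply: le_trans (l1norm_sum _ _ _) _.
by apply: ler_sum => z _; rewrite l1normZ.
Qed.

End L1Norm.

Section ChainBasics.
Variables (K : mcdata) (R : realType) (n : nat).
Implicit Types (c d : chain K R).

Lemma fglift_gen (M : lmodType R) (f : asimp K -> M) sg : fglift f (gen R sg) = f sg.
Proof. by rewrite liftU scale1r. Qed.

Lemma is_chain0 : is_chain n (0 : chain K R).
Proof. by rewrite /is_chain dom0. Qed.

Lemma is_chainD c d : is_chain n c -> is_chain n d -> is_chain n (c + d).
Proof.
move=> /allP cn /allP dn; apply/allP => sg /domD_subset.
by rewrite mem_cat => /orP[/cn|/dn].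
Qed.

Lemma is_chainZ k c : is_chain n c -> is_chain n (k *: c).
Proof. by move=> /allP cn; apply/allP => sg /domZ_subset /cn. Qed.

Lemma is_chainB c d : is_chain n c -> is_chain n d -> is_chain n (c - d).
Proof. by move=> cn dn; rewrite -scaleN1r; apply/is_chainD/is_chainZ. Qed.

Lemma is_chain_sum I (r : seq I) (F : I -> chain K R) :
  (forall i, is_chain n (F i)) -> is_chain n (\sum_(i <- r) F i).
Proof.
by move=> Fn; apply: (big_ind (is_chain n)); [apply: is_chain0|apply: is_chainD|].
Qed.

Lemma is_chain_fglift (f : asimp K -> chain K R) c :
  {in dom c, forall sg, is_chain n (f sg)} -> is_chain n (fglift f c).
Proof.
move=> fn; rewrite fgliftE big_seq; apply: (big_ind (is_chain n)).
- exact: is_chain0.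
- exact: is_chainD.
by move=> sg /fn; apply: is_chainZ.
Qed.

Lemma bd0 : bd (0 : chain K R) = 0.
Proof. exact: raddf0. Qed.

Lemma bdD : {morph @bd K R : c d / c + d}.
Proof. exact: raddfD. Qed.

Lemma bdB : {morph @bd K R : c d / c - d}.
Proof. exact: raddfB. Qed.

Lemma bdZ k c : bd (k *: c) = k *: bd c.
Proof. exact: fgliftZ. Qed.

End ChainBasics.

Section MulticomplexChains.
Variables (K : mcdata) (R : realType).
Hypothesis HK : is_multicomplex K.
Local Open Scope fset_scope.
Local Open Scope ring_scope.
Local Notation V := (mc_V K).
Local Notation S := (mc_S K).
Implicit Types (s : S) (W : {fset V}) (w y : seq V) (n : nat).

Lemma vset_neq0 s : vset s != fset0.
Proof. by case: HK. Qed.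

Lemma vset_face s W : W `<=` vset s -> W != fset0 -> vset (face s W) = W.
Proof. by case: HK => _ [vf _]; apply: vf. Qed.

Lemma face_vset s : face s (vset s) = s.
Proof. by case: HK => _ [_ [fv _]]; apply: fv. Qed.

Lemma face_face s W W' : W' `<=` W -> W `<=` vset s -> W' != fset0 ->
  face (face s W) W' = face s W'.
Proof. by case: HK => _ [_ [_ [ff _]]]; apply: ff. Qed.

Definition vset_seq w : {fset V} := [fset x | x in w].

Definition asimp_in s w : asimp K := (face s (vset_seq w), w).

Definition gen_in s w : chain K R := gen R (asimp_in s w).

Lemma in_vset_seq x w : (x \in vset_seq w) = (x \in w).
Proof. by rewrite inE. Qed.

Lemma vset_seq_neq0 w : w != [::] -> vset_seq w != fset0.
Proof.
by case: w => [|a w] // _; apply/fset0Pn; exists a; rewrite in_vset_seq mem_head.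
Qed.

Lemma vset_seq_sub w w' : {subset w <= w'} -> vset_seq w `<=` vset_seq w'.
Proof. by move=> ww'; apply/fsubsetP => x; rewrite !in_vset_seq => /ww'. Qed.

Lemma asimp_in_face s W w : W `<=` vset s -> vset_seq w `<=` W -> w != [::] ->
  asimp_in (face s W) w = asimp_in s w.
Proof. by move=> sW wW wn; rewrite /asimp_in face_face ?vset_seq_neq0. Qed.

Lemma aface_asimp_in s w i : vset_seq w `<=` vset s -> (1 < size w)%N ->
  aface i (asimp_in s w) = asimp_in s (take i w ++ drop i.+1 w).
Proof.
move=> ws sw; rewrite /aface /asimp_in /= vset_face ?vset_seq_neq0 -?size_eq0 //.
  case: eqP => [<-|_] //; rewrite face_face ?vset_seq_neq0 //.
    by apply: vset_seq_sub => x; rewrite mem_cat => /orP[/mem_take|/mem_drop].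
  rewrite -size_eq0 -lt0n size_cat size_take size_drop.
  by set m := size w; case: (ltnP i m) => hi; lia.
by case: (size w) sw.
Qed.

Lemma bd_simp_in s w : vset_seq w `<=` vset s -> (1 < size w)%N ->
  bd_simp R (asimp_in s w) = face_sum (gen_in s) w.
Proof.
move=> ws sw; rewrite /bd_simp /= leqNgt sw face_sumE.
by apply: eq_bigr => i _; rewrite aface_asimp_in.
Qed.

Lemma bd_gen_in s w : vset_seq w `<=` vset s -> (1 < size w)%N ->
  bd (gen_in s w) = face_sum (gen_in s) w.
Proof. by move=> ws sw; rewrite /bd fglift_gen bd_simp_in. Qed.

Lemma is_chain_gen_in n s w : vset_seq w `<=` vset s -> size w = n.+1 ->
  is_chain n (gen_in s w).
Proof.
move=> ws sw; have wn : w != [::] by rewrite -size_eq0 sw.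
rewrite /is_chain /gen_in /gen domU1 /= andbT /is_asimp /= sw eqxx /=.
by rewrite vset_face ?vset_seq_neq0.
Qed.

End MulticomplexChains.

Lemma cardfs_le1 (T : choiceType) (X : {fset T}) :
  {in X &, forall x y, x = y} -> (#|` X| <= 1)%N.
Proof.
move=> X1; have [->|[x xX]] := fset_0Vmem X; first by rewrite cardfs0.
rewrite -(cardfs1 x); apply/fsubset_leq_card/fsubsetP => y yX.
by rewrite inE (X1 _ _ yX xX).
Qed.

Lemma card_ord_in_seq m (t : seq nat) :
  (#|[pred j : 'I_m | val j \in t]| <= size t)%N.
Proof.
rewrite cardE -(size_map val); apply: uniq_leq_size.
  by rewrite map_inj_uniq ?enum_uniq //; apply: val_inj.
by move=> x /mapP [j]; rewrite mem_enum => jt ->.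
Qed.

Section PrismHomotopy.
Variables (K : mcdata) (R : realType).
Hypothesis HK : is_multicomplex K.
Local Open Scope fset_scope.
Local Open Scope ring_scope.
Local Notation V := (mc_V K).
Local Notation S := (mc_S K).
Variables (Fv : V * bool -> V) (Fs : mc_S (prism K) -> S).
Hypothesis HF : @is_smap (prism K) K Fv Fs.
Implicit Types (s : S) (A B : {fset V}) (z : seq V).

(* The default [incl_s true s] is a junk value, used only when
   [~~ prism_ok (s, A, B)]. *)
Definition prism_simplex s A B : mc_S (prism K) :=
  insubd (incl_s true s) (s, A, B).

Definition prism_verts A B : {fset V * bool} :=
  [fset (v, false) | v in A] `|` [fset (v, true) | v in B].

Definition Fv_prism_verts A B : {fset V} := [fset Fv p | p in prism_verts A B].

Lemma in_prism_verts A B v (b : bool) :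
  ((v, b) \in prism_verts A B) = (if b then v \in B else v \in A).
Proof.
rewrite in_fsetU; case: b; apply/orP/idP.
- by case=> /imfsetP [u /= uB [->]].
- by move=> vB; right; apply/imfsetP; exists v.
- by case=> /imfsetP [u /= uA [->]].
- by move=> vA; left; apply/imfsetP; exists v.
Qed.

Lemma prism_verts_sub A B A' B' :
  A' `<=` A -> B' `<=` B -> prism_verts A' B' `<=` prism_verts A B.
Proof.
move=> /fsubsetP AA' /fsubsetP BB'; apply/fsubsetP => -[v b].
by rewrite !in_prism_verts; case: b; [apply: BB'|apply: AA'].
Qed.

Lemma Fv_prism_verts_sub A B A' B' :
  A' `<=` A -> B' `<=` B -> Fv_prism_verts A' B' `<=` Fv_prism_verts A B.
Proof.
by move=> AA' BB'; apply/subset_imfset/fsubsetP/prism_verts_sub.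
Qed.

Lemma val_prism_simplex s A B :
  prism_ok (s, A, B) -> val (prism_simplex s A B) = (s, A, B).
Proof. by move=> ok; rewrite /prism_simplex insubdK. Qed.

Lemma vset_Fs_prism s A B :
  prism_ok (s, A, B) -> vset (Fs (prism_simplex s A B)) = Fv_prism_verts A B.
Proof. by case: HF => vF _ ok; rewrite vF /= /prism_vset val_prism_simplex. Qed.

Lemma prism_ok_face s A B A' B' : prism_ok (s, A, B) ->
  A' `<=` A -> B' `<=` B -> A' `|` B' != fset0 ->
  prism_ok (face s (A' `|` B'), A', B').
Proof.
rewrite /prism_ok /= => /andP[/eqP AB AB1] AA' BB' AB'.
rewrite vset_face // -?AB ?fsetUSS // eqxx /=.
exact/(leq_trans _ AB1)/fsubset_leq_card/fsetISS.
Qed.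

Lemma Fs_prism_face s A B A' B' : prism_ok (s, A, B) ->
  A' `<=` A -> B' `<=` B -> A' `|` B' != fset0 ->
  Fs (prism_simplex (face s (A' `|` B')) A' B') =
  face (Fs (prism_simplex s A B)) (Fv_prism_verts A' B').
Proof.
move=> ok AA' BB' AB'; case: HF => _ Fface.
have sub : prism_verts A' B' `<=` vset (prism_simplex s A B).
  by rewrite /= /prism_vset val_prism_simplex // prism_verts_sub.
have ne : prism_verts A' B' != fset0.
  move: AB' => /fset0Pn [v]; rewrite in_fsetU => /orP[vA|vB]; apply/fset0Pn.
    by exists (v, false); rewrite in_prism_verts.
  by exists (v, true); rewrite in_prism_verts.
rewrite -(Fface _ _ sub ne); congr Fs; apply: val_inj.
have EA : [fset p.1 | p in prism_verts A' B' & ~~ p.2] = A'.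
  apply/fsetP => v; apply/imfsetP/idP => [[[u [|]]] /= /andP[] //|vA].
    by rewrite in_prism_verts => uA _ ->.
  by exists (v, false); rewrite // !inE /= andbT -in_fsetU in_prism_verts.
have EB : [fset p.1 | p in prism_verts A' B' & p.2] = B'.
  apply/fsetP => v; apply/imfsetP/idP => [[[u [|]]] /= /andP[] //|vB].
    by rewrite in_prism_verts => uB _ ->.
  by exists (v, true); rewrite // !inE /= andbT -in_fsetU in_prism_verts.
rewrite /= /prism_face EA EB val_prism_simplex //.
have ok' := prism_ok_face ok AA' BB' AB'.
by rewrite val_prism_simplex // insubdK.
Qed.

Lemma gen_in_prism_face s A B A' B' z : prism_ok (s, A, B) ->
  A' `<=` A -> B' `<=` B -> A' `|` B' != fset0 ->
  all (fun x => x \in Fv_prism_verts A' B') z -> z != [::] ->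
  gen_in R (Fs (prism_simplex (face s (A' `|` B')) A' B')) z =
  gen_in R (Fs (prism_simplex s A B)) z.
Proof.
move=> ok AA' BB' AB' /allP zAB zn.
rewrite (Fs_prism_face ok) // /gen_in asimp_in_face //.
  by rewrite vset_Fs_prism // Fv_prism_verts_sub.
by apply/fsubsetP => x; rewrite in_vset_seq => /zAB.
Qed.

Section Staircase.
Variable r : V -> nat.
Implicit Types (sg : asimp K) (a b j k : nat).

(* At stage [j] the vertices of rank [< j] sit at the end [false] of the prism
   (where [F] is the given map) and the others at the end [true] (where [F] is
   the identity).  Stages [j] and [j.+1] both lie in the (n+1)-simplex of
   [s x [0,1]] in which the vertex of rank [j] occurs at both ends. *)
Definition below s a := [fset v in vset s | (r v < a)%N].
Definition above s b := [fset v in vset s | (b <= r v)%N].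

Definition stage_vertex j v := Fv (v, (j <= r v)%N).

Definition stair_gen s a b : seq V -> chain K R :=
  gen_in R (Fs (prism_simplex s (below s a) (above s b))).

Definition stair_verts s a b := Fv_prism_verts (below s a) (above s b).

Definition stage_chain j sg : chain K R :=
  stair_gen sg.1 j j (map (stage_vertex j) sg.2).

Definition step_prism j sg : chain K R :=
  prism_sum (stair_gen sg.1 j.+1 j)
    (map (stage_vertex j.+1) sg.2) (map (stage_vertex j) sg.2).

Definition stage_prism j sg : chain K R :=
  prism_sum (stair_gen sg.1 j j)
    (map (stage_vertex j) sg.2) (map (stage_vertex j) sg.2).

(* Subtracting the degenerate prism does not change [d H + H d], but makes
   the step vanish unless [j] is the rank of a vertex of [sg]. *)
Definition step_homotopy j sg : chain K R := step_prism j sg - stage_prism j sg.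

Definition stair_homotopy m sg : chain K R := \sum_(j < m) step_homotopy j sg.

Definition ranked sg :=
  [/\ vset_seq sg.2 = vset sg.1, sg.2 != [::] & {in vset sg.1 &, injective r}].

Lemma below_above_U s a b : (b <= a)%N -> below s a `|` above s b = vset s.
Proof.
move=> ba; apply/fsetP => v; rewrite in_fsetU !inE.
by case: (v \in vset s); case: ltnP => //= /(leq_trans ba) ->.
Qed.

Lemma prism_ok_stair s a b : (b <= a <= b.+1)%N -> {in vset s &, injective r} ->
  prism_ok (s, below s a, above s b).
Proof.
move=> /andP[ba ab] r_inj; rewrite /prism_ok /= below_above_U // eqxx /=.
apply: cardfs_le1 => x y; rewrite !inE => /andP[/andP[xs xa] /andP[_ xb]].
move=> /andP[/andP[ys ya] /andP[_ yb]]; apply: r_inj => //.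
by apply/eqP; rewrite eqn_leq; move: (r x) (r y) xa xb ya yb ab => p q; lia.
Qed.

Lemma prism_ok_stage s j : {in vset s &, injective r} ->
  prism_ok (s, below s j, above s j).
Proof. by apply: prism_ok_stair; rewrite leqnn leqnSn. Qed.

Lemma prism_ok_step s j : {in vset s &, injective r} ->
  prism_ok (s, below s j.+1, above s j).
Proof. by apply: prism_ok_stair; rewrite leqnn leqnSn. Qed.

Lemma all_stage_vertex s a b k z : vset_seq z `<=` vset s -> (b <= k <= a)%N ->
  all (fun x => x \in stair_verts s a b) (map (stage_vertex k) z).
Proof.
move=> /fsubsetP zs /andP[bk ka]; apply/allP => _ /mapP [v vz ->].
have vs : v \in vset s by apply: zs; rewrite in_vset_seq.
apply/imfsetP; exists (v, (k <= r v)%N) => //.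
rewrite in_prism_verts; case: (leqP k (r v)) => h; rewrite !inE vs /=.
  exact: leq_trans bk h.
exact: leq_trans h ka.
Qed.

Lemma below_face s Y a : Y `<=` vset s -> Y != fset0 ->
  below (face s Y) a = [fset v in Y | (r v < a)%N].
Proof. by move=> Ys Yn; rewrite /below vset_face. Qed.

Lemma above_face s Y b : Y `<=` vset s -> Y != fset0 ->
  above (face s Y) b = [fset v in Y | (b <= r v)%N].
Proof. by move=> Ys Yn; rewrite /above vset_face. Qed.

Lemma gen_in_stair_face s Y a b z : prism_ok (s, below s a, above s b) ->
  (b <= a)%N -> Y `<=` vset s -> Y != fset0 ->
  all (fun x => x \in stair_verts (face s Y) a b) z -> z != [::] ->
  stair_gen (face s Y) a b z = stair_gen s a b z.
Proof.
move=> ok ba Ys Yn zY zn.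
have U : below (face s Y) a `|` above (face s Y) b = Y.
  by rewrite below_above_U // vset_face.
have sub_below : below (face s Y) a `<=` below s a.
  rewrite below_face //; apply/fsubsetP => v; rewrite !inE => /andP[vY ->].
  by rewrite (fsubsetP Ys _ vY).
have sub_above : above (face s Y) b `<=` above s b.
  rewrite above_face //; apply/fsubsetP => v; rewrite !inE => /andP[vY ->].
  by rewrite (fsubsetP Ys _ vY).
by rewrite /stair_gen -[in prism_simplex (face s Y)]U (gen_in_prism_face ok) // U.
Qed.

Lemma gen_in_stair_sub s a b a' b' z : prism_ok (s, below s a, above s b) ->
  (b' <= a')%N -> (a' <= a)%N -> (b <= b')%N ->
  all (fun x => x \in stair_verts s a' b') z -> z != [::] ->
  stair_gen s a' b' z = stair_gen s a b z.
Proof.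
move=> ok ba aa bb zAB zn.
have U : below s a' `|` above s b' = vset s by rewrite below_above_U.
have sub_below : below s a' `<=` below s a.
  by apply/fsubsetP => v; rewrite !inE => /andP[-> /leq_trans]; apply.
have sub_above : above s b' `<=` above s b.
  by apply/fsubsetP => v; rewrite !inE => /andP[-> /(leq_trans bb)].
rewrite /stair_gen -{1}(face_vset HK s) -[in face s (vset s)]U.
rewrite (gen_in_prism_face ok) //.
by rewrite U vset_neq0.
Qed.

Lemma bd_stair_prism s a b k k' w : prism_ok (s, below s a, above s b) ->
  vset_seq w `<=` vset s -> w != [::] -> (b <= k <= a)%N -> (b <= k' <= a)%N ->
  bd (prism_sum (stair_gen s a b) (map (stage_vertex k') w) (map (stage_vertex k) w))
  = prism_sum (face_sum (stair_gen s a b))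
      (map (stage_vertex k') w) (map (stage_vertex k) w).
Proof.
move=> ok ws wn bka bk'a; rewrite (prism_sum_morph (@bdB K R)).
apply: (prism_sum_eq_in (X := fun x => x \in stair_verts s a b));
  rewrite ?size_map //; try exact: all_stage_vertex.
move=> y Sy /allP yv; rewrite /stair_gen (bd_gen_in R HK) //; last first.
  by rewrite Sy ltnS lt0n size_eq0.
by rewrite vset_Fs_prism //; apply/fsubsetP => x; rewrite in_vset_seq => /yv.
Qed.

Lemma stair_prism_face s Y y a b k k' :
  prism_ok (s, below s a, above s b) -> (b <= a)%N -> Y `<=` vset s -> Y != fset0 ->
  vset_seq y `<=` Y -> (b <= k <= a)%N -> (b <= k' <= a)%N ->
  prism_sum (stair_gen (face s Y) a b)
    (map (stage_vertex k') y) (map (stage_vertex k) y) =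
  prism_sum (stair_gen s a b) (map (stage_vertex k') y) (map (stage_vertex k) y).
Proof.
move=> ok ba Ys Yn yY bka bk'a.
have yY' : vset_seq y `<=` vset (face s Y) by rewrite vset_face.
apply: (prism_sum_eq_in (X := fun x => x \in stair_verts (face s Y) a b));
  rewrite ?size_map //; try exact: all_stage_vertex.
move=> z Sz zY.
by apply: gen_in_stair_face; rewrite // -size_eq0 Sz.
Qed.

Lemma fglift_step_homotopy_bd j sg : ranked sg ->
  fglift (step_homotopy j) (bd_simp R sg) =
  face_sum (fun y => step_homotopy j (sg.1, y)) sg.2.
Proof.
case: sg => s w [/= ws wn r_inj].
have okC := prism_ok_step j r_inj; have okE := prism_ok_stage j r_inj.
have [sw|] := ltnP 1 (size w); last first.
  case: w ws wn => [|x [|]] //= _ _ _.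
  by rewrite /bd_simp /= raddf0 /step_homotopy /step_prism /stage_prism /= !subr0.
rewrite -[in bd_simp _ _](face_vset HK s) -ws -/(asimp_in s w) bd_simp_in ?ws //.
rewrite (face_sum_morph (fgliftB (step_homotopy j))).
apply: (face_sum_eq_in (X := fun x => x \in vset s)).
  by apply/allP => x xw; rewrite -ws in_vset_seq.
move=> y Sy /allP ys.
have yn : y != [::] by rewrite -size_eq0 -eqSS Sy; case: (size w) sw => [|[]].
have yY : vset_seq y `<=` vset s by apply/fsubsetP => x; rewrite in_vset_seq => /ys.
rewrite /gen_in fglift_gen /step_homotopy /step_prism /stage_prism /=.
by congr (_ - _); apply: stair_prism_face; rewrite ?vset_seq_neq0 ?leqnSn ?leqnn.
Qed.

Lemma step_homotopy_formula j sg : ranked sg ->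
  bd (step_homotopy j sg) + fglift (step_homotopy j) (bd_simp R sg) =
  stage_chain j sg - stage_chain j.+1 sg.
Proof.
move=> rk; rewrite fglift_step_homotopy_bd //; case: sg rk => s w [/= ws wn r_inj].
have okC := prism_ok_step j r_inj; have okE := prism_ok_stage j r_inj.
have wsub : vset_seq w `<=` vset s by rewrite ws.
have mn k : map (stage_vertex k) w != [::] by rewrite -size_eq0 size_map size_eq0.
rewrite /step_homotopy bdB face_sumB /step_prism /stage_prism /stage_chain /=.
rewrite (bd_stair_prism okC) ?leqnn ?leqnSn // (bd_stair_prism okE) ?leqnn //.
rewrite addrACA -opprD !prism_sum_homotopy subrr subr0.
by congr (_ - _); symmetry; apply: (gen_in_stair_sub okC);
  rewrite ?leqnn ?leqnSn //; apply: all_stage_vertex; rewrite ?leqnn.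
Qed.

Lemma stair_homotopy_formula m sg : ranked sg ->
  bd (stair_homotopy m sg) + fglift (stair_homotopy m) (bd_simp R sg) =
  stage_chain 0 sg - stage_chain m sg.
Proof.
move=> rk; rewrite /stair_homotopy /bd raddf_sum fglift_funsum -big_split /=.
under eq_bigr do rewrite step_homotopy_formula //.
elim: m => [|m IH]; first by rewrite big_ord0 subrr.
by rewrite big_ord_recr /= IH addrA subrK.
Qed.

Lemma step_homotopy_eq0 j s w : j \notin map r w -> vset_seq w = vset s ->
  step_homotopy j (s, w) = 0.
Proof.
move=> jw ws; have rj v : v \in vset s -> r v != j.
  by rewrite -ws in_vset_seq => vw; apply: contraNneq jw => <-; apply: map_f.
rewrite /step_homotopy /step_prism /stage_prism /stair_gen /=.
have -> : below s j.+1 = below s j.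
  apply/fsetP => v; rewrite !inE; case vs: (v \in vset s) => //=.
  by rewrite ltnS leq_eqVlt (negbTE (rj v vs)).
have -> : map (stage_vertex j.+1) w = map (stage_vertex j) w.
  apply/eq_in_map => v vw; have vs : v \in vset s by rewrite -ws in_vset_seq.
  by rewrite /stage_vertex [(j <= r v)%N]leq_eqVlt eq_sym (negbTE (rj v vs)).
by rewrite subrr.
Qed.

Lemma l1norm_step_homotopy j sg :
  l1norm (step_homotopy j sg) <= (size sg.2 + size sg.2)%:R.
Proof.
have l1norm_prism io u v : size u = size v -> size u = size sg.2 ->
    (forall y, l1norm (io y : chain K R) <= 1) ->
    l1norm (prism_sum io u v) <= (size sg.2)%:R.
  move=> uv <- io1; apply: (prism_sum_norm (X := predT)); rewrite ?all_predT //.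
    exact: l1norm0.
  exact: l1normB.
rewrite natrD; apply: le_trans (l1normB _ _) (lerD _ _);
  apply: l1norm_prism; rewrite ?size_map // => y;
  by rewrite /stair_gen /gen_in l1norm_gen.
Qed.

Lemma l1norm_stair_homotopy m sg : ranked sg ->
  l1norm (stair_homotopy m sg) <= (size sg.2)%:R * (size sg.2 + size sg.2)%:R.
Proof.
case: sg => s w [/= ws _ _]; rewrite /stair_homotopy.
rewrite (bigID (fun j : 'I_m => val j \in map r w)) /=.
rewrite [X in _ + X]big1 ?addr0 => [|j /step_homotopy_eq0 -> //].
apply: le_trans (l1norm_sum _ _ _) _.
apply: (le_trans (y := \sum_(j < m | val j \in map r w) (size w + size w)%:R)).
  by apply: ler_sum => j _; apply: l1norm_step_homotopy.
rewrite sumr_const -(mulr_natl (size w + size w)%:R) ler_wpM2r // ler_nat.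
by rewrite -(size_map r) card_ord_in_seq.
Qed.

Lemma is_chain_stair_prism n s a b k k' w : prism_ok (s, below s a, above s b) ->
  vset_seq w `<=` vset s -> size w = n.+1 -> (b <= k <= a)%N -> (b <= k' <= a)%N ->
  is_chain n.+1
    (prism_sum (stair_gen s a b) (map (stage_vertex k') w) (map (stage_vertex k) w)).
Proof.
move=> ok ws sw bka bk'a.
apply: (prism_sum_ind (P := is_chain n.+1) (X := fun x => x \in stair_verts s a b));
  rewrite ?size_map //; try exact: all_stage_vertex.
- exact: is_chain0.
- exact: is_chainB.
move=> y Sy /allP yv; apply: (is_chain_gen_in R HK); last by rewrite Sy sw.
by rewrite vset_Fs_prism //; apply/fsubsetP => x; rewrite in_vset_seq => /yv.
Qed.

Lemma is_chain_stair_homotopy n m sg : ranked sg -> size sg.2 = n.+1 ->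
  is_chain n.+1 (stair_homotopy m sg).
Proof.
case: sg => s w [/= ws _ r_inj] sw; apply: is_chain_sum => j.
by apply: is_chainB; apply: is_chain_stair_prism;
  rewrite ?ws ?leqnn ?leqnSn ?prism_ok_step ?prism_ok_stage.
Qed.

End Staircase.

(* One ranking for all the simplices of [c], so that a simplex and its faces
   carry compatible staircases. *)
Lemma chain_ranking n (c : chain K R) : is_chain n c ->
  exists (r : V -> nat) (m : nat), {in dom c, forall sg,
    [/\ ranked r sg, size sg.2 = n.+1 & {in vset sg.1, forall v, r v < m}%N]}.
Proof.
move=> cn; pose Us := flatten [seq sg.2 | sg <- dom c].
exists (index^~ Us), (size Us) => sg sgc.
have /andP[/eqP sn /eqP ws] := allP cn _ sgc.
have inUs v : v \in vset sg.1 -> v \in Us.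
  rewrite -ws => /imfsetP [x /= xw ->].
  by apply/flattenP; exists sg.2 => //; apply: map_f.
split=> // [|v /inUs]; last by rewrite index_mem.
split=> //; first by rewrite -size_eq0 sn.
by move=> x y /inUs xU /inUs yU; apply: (@index_inj _ x).
Qed.

Section Endpoints.
Variables (fv : V -> V) (fs : S -> S).
Hypotheses (F0v : Fv \o incl_v false =1 fv) (F0s : Fs \o incl_s false =1 fs).
Hypotheses (F1v : Fv \o incl_v true =1 id) (F1s : Fs \o incl_s true =1 id).

Lemma stage_chain0 r sg : ranked r sg -> stage_chain r 0 sg = gen R sg.
Proof.
case: sg => s w [/= ws _ _]; rewrite /stage_chain /stair_gen /=.
have -> : below r s 0 = fset0 by apply/fsetP => v; rewrite !inE ltn0 andbF.
have -> : above r s 0 = vset s by apply/fsetP => v; rewrite !inE andbT.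
have -> : prism_simplex s fset0 (vset s) = incl_s true s.
  by apply: val_inj; rewrite val_prism_simplex //; apply: prism_ok1.
have -> : map (stage_vertex r 0) w = w.
  by rewrite -[RHS]map_id; apply/eq_map => v; apply: F1v.
by have /= -> := F1s s; rewrite /gen_in /asimp_in ws face_vset.
Qed.

Lemma stage_chain_end r m sg : ranked r sg -> {in vset sg.1, forall v, r v < m}%N ->
  stage_chain r m sg = gen R (fs sg.1, map fv sg.2).
Proof.
case: sg => s w [/= ws _ _] rm; rewrite /stage_chain /stair_gen /=.
have -> : below r s m = vset s.
  by apply/fsetP => v; rewrite !inE; case vs: (v \in vset s); rewrite //= rm.
have -> : above r s m = fset0.
  by apply/fsetP => v; rewrite !inE; case vs: (v \in vset s); rewrite //= leqNgt rm.
have -> : prism_simplex s (vset s) fset0 = incl_s false s.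
  by apply: val_inj; rewrite val_prism_simplex //; apply: prism_ok0.
have -> : map (stage_vertex r m) w = map fv w.
  apply/eq_in_map => v vw; have vs : v \in vset s by rewrite -ws in_vset_seq.
  by rewrite /stage_vertex leqNgt rm //; apply: F0v.
have /= -> := F0s s; rewrite /gen_in /asimp_in.
suff -> : vset_seq (map fv w) = vset (fs s) by rewrite face_vset.
have /= <- := F0s s; case: HF => vF _; rewrite vF.
apply/fsetP => x; rewrite in_vset_seq; apply/mapP/imfsetP => [[v vw ->]|].
  exists (v, false); last by rewrite -(F0v v).
  by rewrite /= in_prism_verts /= -ws in_vset_seq.
case=> -[v [|]]; rewrite /= in_prism_verts /= ?inE // -ws in_vset_seq => vw ->.
by exists v; rewrite -?(F0v v).
Qed.

Lemma homotopic_map_filling n (c : chain K R) : is_chain n c -> bd c = 0 ->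
  exists b, [/\ is_chain n.+1 b, chain_map fv fs c - c = bd b &
    l1norm b <= (n.+1)%:R * (n.+1 + n.+1)%:R * l1norm c].
Proof.
move=> cn c0; have [r [m rk]] := chain_ranking cn.
exists (- fglift (stair_homotopy r m) c); split.
- rewrite -scaleN1r; apply/is_chainZ/is_chain_fglift => sg /rk [rsg sn _].
  exact: is_chain_stair_homotopy.
- rewrite /bd raddfN /= fglift_comp.
  rewrite (@eq_in_fglift _ _ _ _ (fun sg => gen R sg - gen R (fs sg.1, map fv sg.2)
             - fglift (stair_homotopy r m) (bd_simp R sg))); last first.
    move=> sg /rk [rsg _ rU]; rewrite -(stage_chain0 rsg) -(stage_chain_end rsg rU).
    by rewrite -(stair_homotopy_formula _ rsg) addrK.
  rewrite !fglift_funB fglift_id -fglift_comp.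
  by rewrite -/(bd c) c0 raddf0 subr0 opprB.
rewrite l1normN; apply: le_trans (l1norm_fglift _ _) _.
rewrite /l1norm mulr_sumr !big_seq; apply: ler_sum => sg /rk [rsg sn _].
by rewrite mulrC ler_wpM2r // -sn l1norm_stair_homotopy.
Qed.

End Endpoints.

End PrismHomotopy.

Lemma diffusion_filling (K : mcdata) (R : realType) (G : Type)
    (av : G -> mc_V K -> mc_V K) (as_ : G -> mc_S K -> mc_S K)
    (mu : G -> R) (s : seq G) n (c : chain K R) (C : R) :
  (forall g, 0 <= mu g) -> \sum_(g <- s) mu g = 1 ->
  (forall g, exists b, [/\ is_chain n.+1 b, chain_map (av g) (as_ g) c - c = bd b
                          & l1norm b <= C]) ->
  exists b, [/\ is_chain n.+1 b, diffusion av as_ mu s c - c = bd b & l1norm b <= C].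
Proof.
move=> mu0 mu1 fill.
suff [b [bn bE bC]] : exists b, [/\ is_chain n.+1 b,
    \sum_(g <- s) mu g *: (chain_map (av g) (as_ g) c - c) = bd b &
    l1norm b <= (\sum_(g <- s) mu g) * C].
  exists b; split=> //; last by rewrite -[C]mul1r -mu1.
  rewrite -bE; under eq_bigr do rewrite scalerBr.
  by rewrite sumrB -scaler_suml mu1 scale1r.
elim: s {mu1} => [|g s [b [bn bE bC]]].
  by exists 0; rewrite !big_nil bd0 l1norm0 mul0r; split=> //; apply: is_chain0.
have [bg [bgn bgE bgC]] := fill g.
exists (mu g *: bg + b); split; first by apply/is_chainD/bn/is_chainZ.
  by rewrite big_cons bdD bdZ -bgE -bE.
apply: le_trans (l1normD _ _) _; rewrite l1normZ big_cons mulrDl lerD //.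
by rewrite ger0_norm // ler_wpM2l.
Qed.

Theorem lemma3p2 (R : realType) (n : nat) :
  exists Kn : R,
  forall (K : mcdata) (G : groupType)
         (av : G -> mc_V K -> mc_V K) (as_ : G -> mc_S K -> mc_S K),
    is_multicomplex K ->
    is_saction av as_ ->
    (forall g : G, simp_homotopic_to_id (av g) (as_ g)) ->
    forall c : chain K R, is_chain n c -> bd c = 0 ->
    forall (mu : G -> R) (s : seq G), fin_prob mu s ->
    exists b : chain K R,
      [/\ is_chain n.+1 b,
          diffusion av as_ mu s c - c = bd b &
          l1norm b <= Kn * l1norm c].
Proof.
exists ((n.+1)%:R * (n.+1 + n.+1)%:R).
move=> K G av as_ HK _ htpy c cn c0 mu s [_ _ mu0 mu1].
apply: diffusion_filling => // g.
have [Fv [Fs [HF F0v F0s F1v F1s]]] := htpy g.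
exact: (homotopic_map_filling HK HF F0v F0s F1v F1s).
Qed.
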